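(* Any non-adaptive one-sided tester for submodularity of functions $f:\{0,1\}^n\to\mathbb{R}$ requires $\Omega(\sqrt{n})$ queries. Any adaptive one-sided tester for submodularity requires $\Omega(\log n)$ queries.
   Context: $f$ is submodular if $f(x+\mathbf{e}_i)-f(x)\ge f(y+\mathbf{e}_i)-f(y)$ for all $i$ and $x\le y$ with $x_i=y_i=0$. $f$ is $\epsilon$-far from submodular if every submodular $g$ differs from $f$ on more than an $\epsilon$ fraction of points. A one-sided tester for submodularity (with proximity parameter $\epsilon$) is a randomized algorithm with query access to $f$ that answers YES with probability $1$ if $f$ is submodular and answers NO with probability at least $2/3$ if $f$ is $\epsilon$-far from submodular. It is non-adaptive if its queries do not depend on answers to previous queries. *)

From HB Require Import structures.
From mathcomp Require Import all_boot all_order all_algebra.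
From mathcomp Require Import all_classical all_reals all_analysis.
From mathcomp Require Import Rstruct Rstruct_topology.
From Stdlib Require Import Rdefinitions.

Set Implicit Arguments.
Unset Strict Implicit.
Unset Printing Implicit Defensive.

Import Order.TTheory GRing.Theory Num.Theory.
Local Open Scope classical_set_scope.
Local Open Scope ring_scope.

Notation RR := Rdefinitions.R.

(* A point of the hypercube {0,1}^n (true = 1). *)
Definition point (n : nat) := {ffun 'I_n -> bool}.

(* x + e_i  (only used when x_i = 0) *)
Definition setbit n (x : point n) (i : 'I_n) : point n :=
  [ffun j => (j == i) || x j].

Definition submodular n (f : point n -> RR) : Prop :=
  forall (i : 'I_n) (x y : point n),
    (forall j, x j ==> y j) -> x i = false -> y i = false ->
    f (setbit y i) - f y <= f (setbit x i) - f x.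

Definition eps_far n (eps : RR) (f : point n -> RR) : Prop :=
  forall g : point n -> RR, submodular g ->
    eps * (2 ^ n)%:R < (#|[set x : point n | f x != g x]|)%:R.

(* A deterministic (possibly adaptive) query algorithm: the next query point is
   a function of the answers received so far (the number of answers tells the
   step); the final decision (true = YES) is a function of all the answers. *)
Record alg (n : nat) := Alg {
  qry : seq RR -> point n;
  dec : seq RR -> bool }.

Fixpoint run n (Q : seq RR -> point n) (f : point n -> RR) (k : nat) : seq RR :=
  match k with
  | 0 => [::]
  | k'.+1 => let a := run Q f k' in rcons a (f (Q a))
  end.

Definition accepts n (A : alg n) (q : nat) (f : point n -> RR) : bool :=
  dec A (run (qry A) f q).

Definition nonadaptive n (A : alg n) : Prop :=
  forall s t : seq RR, size s = size t -> qry A s = qry A t.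

(* A randomized algorithm is a family of deterministic algorithms T w indexed
   by a random seed w drawn from a probability space (Omega, P).
   one_sided_tester P T q eps : it makes q queries, is a one-sided tester for
   submodularity with proximity parameter eps. *)
Definition one_sided_tester n (d : measure_display) (Omega : measurableType d)
    (P : probability Omega RR) (T : Omega -> alg n) (q : nat) (eps : RR) : Prop :=
  (forall f : point n -> RR, measurable [set w | accepts (T w) q f]) /\
  (forall f : point n -> RR, submodular f ->
      P [set w | accepts (T w) q f] = 1%E) /\
  (forall f : point n -> RR, eps_far eps f ->
      ((2 / 3 : RR)%:E <= P [set w | ~~ accepts (T w) q f])%E).

(* For i <> 0 the function far_fun i x = -|x|^2 + 3 x_i x_0 on {0,1}^(n+1) is
   1/8-far from submodular: every square {z, z + e_i, z + e_0, z + e_i + e_0}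
   violates submodularity.  For a set S of points, submod_fun S x =
   -|x|^2 + 3 x_0 p_S(x), where p_S(x) = max_(s in S) (3 - d(x, s)) / 3 is
   1/3-Lipschitz, is submodular.  If no two queries at Hamming distance < 3
   differ in coordinate i, then far_fun i agrees on the queries with
   submod_fun {u in queries | u_i = 1}, and a one-sided tester must accept it.
   So the expected number of rejected far_fun i, at least 2n/3, is bounded by
   the number of coordinates separated by close pairs of queries, at most
   2 |U|^2 for a query set U.  A non-adaptive tester has |U| <= q; an adaptive
   one, run on the far_fun i, follows a tree of answers with at most 3^q nodes. *)

From Pilot Require Import Defs.
From HB Require Import structures.
From mathcomp Require Import all_boot all_order all_algebra.
From mathcomp Require Import all_classical all_reals all_analysis.
From mathcomp Require Import Rstruct Rstruct_topology.
From mathcomp Require Import measurable_realfun lra zify.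
(* Re-imported so that [point] denotes the hypercube rather than MathComp-Analysis' [point]. *)
Import Defs.

Set Implicit Arguments.
Unset Strict Implicit.
Unset Printing Implicit Defensive.
Import Order.TTheory GRing.Theory Num.Theory.
Local Open Scope ring_scope.

Lemma leq_card_bigcup (T I : finType) (A : {pred I}) (F : I -> {set T}) :
  (#|\bigcup_(y in A) F y| <= \sum_(y in A) #|F y|)%N.
Proof.
apply: (big_ind2 (fun (X : {set T}) m => #|X| <= m)%N) => [|X a Y b hX hY|//].
  by rewrite cards0.
by apply: leq_trans (leq_card_setU X Y).1 _; exact: leq_add.
Qed.

Section Hamming.
Variable n : nat.
Implicit Types x y z : point n.

Definition hamming x y : nat := #|[set j | x j != y j]|.
Definition weight x : RR := #|[set j | x j]|%:R.

Lemma hammingC x y : hamming x y = hamming y x.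
Proof. by apply: eq_card => j; rewrite !inE eq_sym. Qed.

Lemma hammingxx x : hamming x x = 0%N.
Proof. by apply/eqP; rewrite cards_eq0; apply/eqP/setP => j; rewrite !inE eqxx. Qed.

Lemma hamming_eq0 x y : hamming x y = 0%N -> x = y.
Proof.
move=> /eqP; rewrite cards_eq0 => /eqP /setP xy; apply/ffunP => j.
by have := xy j; rewrite !inE; case: (x j); case: (y j).
Qed.

Lemma hamming_triangle x y z : (hamming x z <= hamming x y + hamming y z)%N.
Proof.
apply: leq_trans (leq_card_setU _ _).1; apply: subset_leq_card.
by apply/fintype.subsetP => j; rewrite !inE; case: (x j); case: (y j); case: (z j).
Qed.

Lemma setbit_id x i : setbit x i i.
Proof. by rewrite ffunE eqxx. Qed.

Lemma setbit_other x i j : j != i -> setbit x i j = x j.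
Proof. by move=> ji; rewrite ffunE (negbTE ji). Qed.

Lemma hamming_setbit x i : (hamming (setbit x i) x <= 1)%N.
Proof.
rewrite -(cards1 i); apply: subset_leq_card; apply/fintype.subsetP => j.
by rewrite !inE ffunE; case: (_ == i) => //=; rewrite eqxx.
Qed.

Lemma hamming_setbit2 x y i : (hamming (setbit x i) (setbit y i) <= hamming x y)%N.
Proof.
apply: subset_leq_card; apply/fintype.subsetP => j.
by rewrite !inE !ffunE; case: (j == i).
Qed.

Lemma weight_setbit x i : x i = false -> weight (setbit x i) = weight x + 1.
Proof.
move=> xi; rewrite /weight; have -> : [set j | setbit x i j] = i |: [set j | x j].
  by apply/setP => j; rewrite !inE ffunE.
by rewrite cardsU1 inE xi natr1.
Qed.

Lemma weight_le x y : (forall j, x j ==> y j) ->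
  weight y = weight x + (hamming x y)%:R.
Proof.
move=> xy; rewrite /weight -natrD -(cardsID [set j | x j] [set j | y j]).
congr (_ + _)%N%:R; apply: eq_card => j; rewrite !inE;
  by have := xy j; case: (x j); case: (y j).
Qed.

End Hamming.

Section Proximity.
Variables (n : nat) (S : {set point n}).
Implicit Types u v : point n.

Definition closeness u : nat := \max_(s in S) (3 - hamming u s).

Definition proximity u : RR := (closeness u)%:R / 3.

Lemma closeness_le3 u : (closeness u <= 3)%N.
Proof. by apply/bigmax_leqP => s _; rewrite leq_subr. Qed.

Lemma closeness_lipschitz u v : (closeness u <= closeness v + hamming u v)%N.
Proof.
apply/bigmax_leqP => s sS.
have := @leq_bigmax_cond _ (mem S) (fun s => 3 - hamming v s)%N _ sS.
have := hamming_triangle v u s; rewrite [hamming v u]hammingC -/(closeness v); lia.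
Qed.

Lemma proximity_lipschitz u v : proximity u - proximity v <= (hamming u v)%:R / 3.
Proof.
rewrite /proximity -mulrBl ler_pM2r ?invr_gt0 ?ltr0n // lerBlDl -natrD ler_nat.
exact: closeness_lipschitz.
Qed.

Lemma proximity_mem u : u \in S -> proximity u = 1.
Proof.
move=> uS; rewrite /proximity; suff -> : closeness u = 3%N by rewrite divff.
apply/eqP; rewrite eqn_leq closeness_le3 /=.
by have := @leq_bigmax_cond _ (mem S) (fun s => 3 - hamming u s)%N _ uS; rewrite hammingxx.
Qed.

Lemma proximity_far u : (forall s, s \in S -> (3 <= hamming u s)%N) ->
  proximity u = 0.
Proof.
move=> far; rewrite /proximity; suff -> : closeness u = 0%N by rewrite mul0r.
apply/eqP; rewrite -leqn0; apply/bigmax_leqP => s sS.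
by rewrite leqn0 subn_eq0 far.
Qed.

End Proximity.

(* [eps_far] is stated with the Stdlib power [Nat.pow], not [expn]. *)
Lemma natpow_expn m k : PeanoNat.Nat.pow m k = (m ^ k)%N.
Proof. by elim: k => // k IH; rewrite expnS -IH. Qed.

Section HardFunctions.
Variable n : nat.
Local Notation pt := (point n.+1).

Definition far_fun (i : 'I_n.+1) (x : pt) : RR :=
  - weight x ^+ 2 + 3 * (x i && x ord0)%:R.

Definition submod_fun (S : {set pt}) (x : pt) : RR :=
  - weight x ^+ 2 + 3 * ((x ord0)%:R * proximity S x).

Lemma proximity_setbit S (x : pt) i :
  `|proximity S (setbit x i) - proximity S x| <= 1 / 3.
Proof.
have h1 : (hamming (setbit x i) x)%:R / 3 <= 1 / 3 :> RR.
  by rewrite ler_pM2r // (_ : 1 = 1%:R) // ler_nat hamming_setbit.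
have := proximity_lipschitz S (setbit x i) x.
have := proximity_lipschitz S x (setbit x i); rewrite hammingC.
rewrite ler_norml; lra.
Qed.

(* The concave term -|x|^2 lowers every marginal by 2 per extra bit of y, which
   dominates the variation of 3 x_0 proximity(x), since proximity is 1/3-Lipschitz. *)
Lemma submod_fun_submodular S : submodular (submod_fun S).
Proof.
move=> k x y xy xk yk; rewrite /submod_fun !weight_setbit //.
have wy := weight_le xy.
have d0 : 0 <= (hamming x y)%:R :> RR by rewrite ler0n.
have [ek | k0] := eqVneq k ord0.
  subst k; rewrite !setbit_id xk yk /= !mul1r !mul0r.
  have : proximity S (setbit y ord0) - proximity S (setbit x ord0)
      <= (hamming x y)%:R / 3.
    apply: le_trans (proximity_lipschitz _ _ _) _.
    by rewrite ler_pM2r // ler_nat hammingC hamming_setbit2.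
  rewrite wy; lra.
rewrite !setbit_other 1?eq_sym //.
have [/hamming_eq0 <- // | xy_neq] := eqVneq (hamming x y) 0%N.
have d1 : 1 <= (hamming x y)%:R :> RR by rewrite ler1n lt0n.
have := proximity_setbit S x k; have := proximity_setbit S y k.
rewrite !ler_norml wy => /andP [? ?] /andP [? ?].
by case: (x ord0); case: (y ord0) => /=; lra.
Qed.

(* On a square {z, z + e_i, z + e_0, z + e_i + e_0} the marginal of e_i grows by 1
   from z to z + e_0, so no submodular function agrees with far_fun i there. *)
Lemma far_fun_square i (g : pt -> RR) (z : pt) :
  i != ord0 -> submodular g -> z i = false -> z ord0 = false ->
  exists2 c, c \in [:: z; setbit z i; setbit z ord0; setbit (setbit z ord0) i]
           & far_fun i c != g c.
Proof.
move=> i0 gs zi z0.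
have z0i : setbit z ord0 i = false by rewrite setbit_other.
have le_z0 : forall j, z j ==> setbit z ord0 j.
  by move=> j; rewrite ffunE; case: (z j); rewrite ?orbT.
set corners := [:: z; _; _; _].
have [/hasP [c ? ?] | /hasPn eq_g] := boolP (has (fun c => far_fun i c != g c) corners).
  by exists c.
have := gs i z (setbit z ord0) le_z0 zi z0i.
have eqfg c : c \in corners -> g c = far_fun i c by move=> /eq_g /negbNE /eqP.
rewrite !eqfg ?(mem_head, inE, eqxx, orbT) // /far_fun !weight_setbit //.
have i0' : ord0 != i by rewrite eq_sym.
rewrite !setbit_id (setbit_other _ i0') (setbit_other _ i0) (setbit_other _ i0').
rewrite setbit_id zi z0 /= => ?; exfalso; lra.
Qed.

Definition square (i : 'I_n.+1) (c : pt) : {set pt} :=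
  [set x : pt | [forall j, (j != i) ==> (j != ord0) ==> (x j == c j)]].

Lemma card_square i c : (#|square i c| <= 4)%N.
Proof.
have -> : 4%N = #|{: bool * bool}| by rewrite card_prod card_bool.
apply: (@leq_card_in _ _ (fun x : pt => (x i, x ord0))).
move=> x y; rewrite !inE => /forallP hx /forallP hy [xi x0].
apply/ffunP => j; have [-> // | ji] := eqVneq j i.
have [-> // | j0] := eqVneq j ord0.
by have := hx j; have := hy j; rewrite ji j0 /= => /eqP -> /eqP ->.
Qed.

Lemma far_fun_far i : i != ord0 -> eps_far (1 / 8) (far_fun i).
Proof.
move=> i0 g gs; set D := [set x | far_fun i x != g x].
have cover : [set: pt] \subset \bigcup_(c in D) square i c.
  apply/fintype.subsetP => x _.
  pose z : pt := [ffun j => (j != i) && (j != ord0) && x j].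
  have [||c c_sq fgc] := far_fun_square (z := z) i0 gs; rewrite ?ffunE ?eqxx ?andbF //.
  apply/bigcupP; exists c; first by rewrite inE.
  rewrite inE; apply/forallP => j; apply/implyP => ji; apply/implyP => j0.
  move: c_sq; rewrite !inE => /or4P [] /eqP ->;
    by rewrite ?setbit_other // ffunE ji j0.
have : (2 ^ n.+1 <= #|D| * 4)%N.
  have -> : (2 ^ n.+1 = #|[set: pt]|)%N by rewrite cardsT card_ffun card_bool card_ord.
  apply: leq_trans (subset_leq_card cover) (leq_trans (leq_card_bigcup _ _) _).
  by rewrite -sum_nat_const; apply: leq_sum => c _; exact: card_square.
rewrite -(ler_nat RR) natrM => hD.
have -> : #|[set x | far_fun i x != g x]%classic| = #|D|.
  by apply: eq_card => x; rewrite /D !inE; apply/idP/idP; rewrite in_setE.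
have : 0 < (2 ^ n.+1)%:R :> RR by rewrite ltr0n expn_gt0.
rewrite natpow_expn; lra.
Qed.

End HardFunctions.

Lemma size_run n (Q : seq RR -> point n) f k : size (run Q f k) = k.
Proof. by elim: k => //= k IH; rewrite size_rcons IH. Qed.

Lemma run_eq_on n (Q : seq RR -> point n) (f g : point n -> RR) q :
  (forall k, (k < q)%N -> f (Q (run Q f k)) = g (Q (run Q f k))) ->
  run Q f q = run Q g q.
Proof.
move=> fg; suff : forall k, (k <= q)%N -> run Q f k = run Q g k by apply.
by elim=> // k IH kq /=; rewrite -IH ?(ltnW kq) // fg.
Qed.

Section Separated.
Variable n : nat.
Local Notation pt := (point n.+1).

Definition separated (U : {set pt}) : {set 'I_n.+1} :=
  [set i | [exists a in U, exists b in U, (a i != b i) && (hamming a b < 3)%N]].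

Lemma card_separated U : (#|separated U| <= 2 * #|U| ^ 2)%N.
Proof.
pose close := [pred p : pt * pt | (p \in finset.setX U U) && (hamming p.1 p.2 < 3)%N].
have sub : separated U \subset \bigcup_(p in close) [set j | p.1 j != p.2 j].
  apply/fintype.subsetP => i; rewrite inE => /exists_inP [a aU /exists_inP [b bU /andP [abi ab]]].
  by apply/bigcupP; exists (a, b); rewrite ?inE /= ?finset.in_setX ?aU ?bU.
apply: leq_trans (subset_leq_card sub) (leq_trans (leq_card_bigcup _ _) _).
apply: leq_trans (_ : \sum_(p in close) 2 <= _)%N.
  by apply: leq_sum => p /andP [_ ?]; rewrite -ltnS.
rewrite sum_nat_const mulnC leq_mul2l /= expnS expn1 -cardsX; apply: subset_leq_card.
by apply/fintype.subsetP => p /andP [].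
Qed.

Lemma far_fun_eq_submod_fun (U : {set pt}) i a : i \notin separated U -> a \in U ->
  far_fun i a = submod_fun [set b in U | b i] a.
Proof.
move=> iU aU; rewrite /far_fun /submod_fun; congr (_ + 3 * _).
case: (a ord0); rewrite ?andbF ?mul0r //= mul1r.
case ai: (a i); first by rewrite proximity_mem // inE aU ai.
rewrite proximity_far // => s /[!inE] /andP [sU si]; rewrite leqNgt.
apply: contra iU => as_close; rewrite inE; apply/exists_inP; exists a => //.
by apply/exists_inP; exists s; rewrite // ai si.
Qed.

Lemma accepts_far_fun (A : alg n.+1) q (U : {set pt}) i :
  (forall k, (k < q)%N -> qry A (run (qry A) (far_fun i) k) \in U) ->
  i \notin separated U ->
  accepts A q (far_fun i) = accepts A q (submod_fun [set b in U | b i]).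
Proof.
move=> qU iU; rewrite /accepts (@run_eq_on _ _ _ (submod_fun [set b in U | b i])) //.
by move=> k kq; apply: far_fun_eq_submod_fun; rewrite ?qU.
Qed.

End Separated.

Section FirstMoment.
Local Open Scope classical_set_scope.
Context d (Omega : measurableType d) (R : realType) (P : probability Omega R).

Lemma negligible_big_setU (I : Type) (r : seq I) (F : I -> set Omega) :
  (forall i, P.-negligible (F i)) -> P.-negligible (\big[setU/set0]_(i <- r) F i).
Proof.
by move=> F0; elim/big_ind: _ => //; [exact: negligible_set0 | exact: negligibleU].
Qed.

Lemma sum_prob_le_count (I : finType) (J : {pred I}) (A : I -> set Omega) (p : R) m :
  (forall i, measurable (A i)) -> (forall i, J i -> (p%:E <= P (A i))%E) ->
  {ae P, forall w, \sum_(i in J) (\1_(A i) w : R) <= m%:R} ->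
  p * #|J|%:R <= m%:R.
Proof.
move=> mA pA count.
have ind_ge0 i w : (0 <= (\1_(A i) w : R)%:E)%E by rewrite lee_fin indicE ler0n.
have mind i : measurable_fun [set: Omega] (fun w => (\1_(A i) w : R)%:E).
  by apply/measurable_EFinP; exact: measurable_indic.
rewrite -lee_fin -[m%:R%:E]mule1 -(probability_setT P) -integral_cst //.
apply: le_trans (_ : (\int[P]_w (\sum_(i <- enum J) (\1_(A i) w : R)%:E) <= _)%E).
  apply: le_trans (_ : (\sum_(i <- enum J) p%:E <= _)%E).
    by rewrite sumEFin big_enum /= sumr_const mulr_natr.
  rewrite ge0_integral_sum // !big_enum /=; apply: lee_sum => i Ji.
  by rewrite integral_indic // setIT; exact: pA.
apply: ae_ge0_le_integral => //.
- by move=> w _; exact: sume_ge0.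
- exact: emeasurable_sum.
- by move=> w _; rewrite lee_fin ler0n.
apply: filterS count => w count _; rewrite sumEFin lee_fin big_enum; exact: count.
Qed.

End FirstMoment.

Section Testers.
Local Open Scope classical_set_scope.
Context (n : nat) d (Omega : measurableType d) (P : probability Omega RR).
Variables (T : Omega -> alg n) (q : nat) (eps : RR).
Hypothesis tester : one_sided_tester P T q eps.

Lemma measurable_rejects f : measurable [set w | ~~ accepts (T w) q f].
Proof.
rewrite (_ : [set w | _] = ~` [set w | accepts (T w) q f]).
  by apply: measurableC; case: tester.
by apply/seteqP; split => w /= /negP.
Qed.

Lemma rejects_submodular_negligible f :
  submodular f -> P.-negligible [set w | ~~ accepts (T w) q f].
Proof.
move=> fsub; have [meas_accept [accept1 _]] := tester.
exists (~` [set w | accepts (T w) q f]); split.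
- exact: measurableC (meas_accept f).
- by rewrite probability_setC // accept1 // subee.
- by move=> w /= /negP.
Qed.

End Testers.

Section QueryLowerBound.
Local Open Scope classical_set_scope.
Context (n : nat) d (Omega : measurableType d) (P : probability Omega RR).
Variables (T : Omega -> alg n.+1) (q : nat).
Local Notation pt := (point n.+1).

(* With probability 2/3 each of the n functions far_fun i is rejected, while
   almost surely only coordinates separated by the queries can be rejected. *)
Lemma separated_lower_bound (U : Omega -> {set pt}) m :
  one_sided_tester P T q (1 / 8) ->
  (forall w i k, (k < q)%N -> qry (T w) (run (qry (T w)) (far_fun i) k) \in U w) ->
  (forall w, (#|separated (U w)| <= m)%N) ->
  2 / 3 * n%:R <= m%:R :> RR.
Proof.
move=> tester qU sepU.
have <- : #|predC1 (ord0 : 'I_n.+1)| = n by rewrite cardC1 card_ord.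
apply: (sum_prob_le_count (A := fun i => [set w | ~~ accepts (T w) q (far_fun i)])).
- by move=> i; exact: measurable_rejects tester _.
- by have [_ [_ far]] := tester; move=> i i0; exact/far/far_fun_far.
apply: (negligibleS _ (negligible_big_setU (enum {set pt}) (fun S =>
    rejects_submodular_negligible tester (submod_fun_submodular S)))).
move=> w /=; apply: contra_notP => Nw.
apply: le_trans (_ : \sum_(i in predC1 ord0) (i \in separated (U w) : nat)%:R <= _).
  apply: ler_sum => i _; rewrite indicE.
  have [iU | iU] := boolP (i \in separated (U w)); first by rewrite ler_nat leq_b1.
  rewrite (_ : w \in _ = false) //; apply/negP; rewrite in_setE /= => rej; apply: Nw.
  rewrite -bigcup_seq; exists [set b in U w | b i]; first by rewrite /= mem_enum.
  by rewrite /= -(accepts_far_fun (qU w i) iU).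
rewrite -natr_sum ler_nat -big_mkcondr /= sum1_card; apply: leq_trans (sepU w).
by apply: subset_leq_card; apply/fintype.subsetP => i /andP [].
Qed.

End QueryLowerBound.

Section AnswerTree.
Variable n : nat.
Local Notation pt := (point n.+1).

(* Contains every answer sequence of length at most k of Q run on some far_fun i,
   since each answer is -w^2 or -w^2 + 3 for the weight w of the query. *)
Fixpoint answer_tree (Q : seq RR -> pt) (k : nat) : seq (seq RR) :=
  if k is k'.+1 then
    let t := answer_tree Q k' in
    t ++ map (fun a => rcons a (- weight (Q a) ^+ 2)) t
      ++ map (fun a => rcons a (- weight (Q a) ^+ 2 + 3)) t
  else [:: [::]].

Lemma size_answer_tree Q k : size (answer_tree Q k) = (3 ^ k)%N.
Proof. by elim: k => //= k IH; rewrite !size_cat !size_map IH expnS; lia. Qed.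

Lemma answer_tree_mono Q k k' : (k <= k')%N -> {subset answer_tree Q k <= answer_tree Q k'}.
Proof.
elim: k' => [|k' IH]; first by rewrite leqn0 => /eqP ->.
rewrite leq_eqVlt => /orP [/eqP -> // | /IH sub] a /sub /= ta.
by rewrite mem_cat ta.
Qed.

Lemma run_far_fun_in_answer_tree Q i k : run Q (far_fun i) k \in answer_tree Q k.
Proof.
elim: k => [|k IH] /=; first by rewrite inE.
rewrite !mem_cat /far_fun; case: (_ && _) => /=.
  by rewrite mulr1 (map_f (fun a => rcons a (- weight (Q a) ^+ 2 + 3)) IH) !orbT.
by rewrite mulr0 addr0 (map_f (fun a => rcons a (- weight (Q a) ^+ 2)) IH) orbT.
Qed.

End AnswerTree.

Section TesterLowerBounds.
Context (n : nat) d (Omega : measurableType d) (P : probability Omega RR).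
Variables (T : Omega -> alg n.+1) (q : nat).

Lemma nonadaptive_lower_bound : (forall w, nonadaptive (T w)) ->
  one_sided_tester P T q (1 / 8) -> 2 / 3 * n%:R <= (2 * q ^ 2)%:R :> RR.
Proof.
move=> nonad tester.
pose U w := [set qry (T w) (nseq k 0) | k : 'I_q].
apply: (separated_lower_bound (U := U) tester).
  move=> w i k kq; apply/imsetP; exists (Ordinal kq) => //=.
  by apply: nonad; rewrite size_run size_nseq.
move=> w; apply: leq_trans (card_separated _) _; rewrite leq_mul2l leq_exp2r //.
by apply: leq_trans (leq_imset_card _ _) _; rewrite card_ord.
Qed.

Lemma adaptive_lower_bound :
  one_sided_tester P T q (1 / 8) -> 2 / 3 * n%:R <= (2 * 9 ^ q)%:R :> RR.
Proof.
move=> tester.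
pose U w := [set x in map (qry (T w)) (answer_tree (qry (T w)) q)].
apply: (separated_lower_bound (U := U) tester).
  move=> w i k kq; rewrite inE; apply: map_f.
  exact: answer_tree_mono (ltnW kq) _ (run_far_fun_in_answer_tree _ _ _).
move=> w; apply: leq_trans (card_separated _) _.
rewrite leq_mul2l /= (_ : 9 = 3 ^ 2)%N // -expnM mulnC expnM leq_exp2r //.
by rewrite cardsE -(size_answer_tree (qry (T w)) q) -(size_map (qry (T w))) card_size.
Qed.

End TesterLowerBounds.

Lemma sqrt_lower_bound (n q : nat) : (1 <= n)%N ->
  2 / 3 * n%:R <= (2 * q ^ 2)%:R :> RR -> 1 / 3 * Num.sqrt (n.+1)%:R <= q%:R :> RR.
Proof.
move=> n1 nq.
have : (n.+1)%:R <= (3 * q%:R) ^+ 2 :> RR.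
  have : 1 <= n%:R :> RR by rewrite ler1n.
  rewrite natrM natrX in nq; rewrite -natr1; move: nq; nra.
move=> /ler_wsqrtr; rewrite sqrtr_sqr ger0_norm ?mulr_ge0 ?ler0n //.
have := sqrtr_ge0 ((n.+1)%:R : RR); lra.
Qed.

Lemma ln_lower_bound (n q : nat) : (4 <= n)%N ->
  2 / 3 * n%:R <= (2 * 9 ^ q)%:R :> RR -> 1 / 8 * ln (n.+1)%:R <= q%:R :> RR.
Proof.
move=> n4 nq.
have n_le : (n <= 3 * 9 ^ q)%N by rewrite -(ler_nat RR) !natrM; rewrite natrM in nq; lra.
have q1 : (1 <= q)%N by case: q n_le {nq} => //; rewrite expn0; lia.
have : (n.+1 <= 9 ^ (q * 2))%N.
  have : (9 <= 9 ^ q)%N by rewrite -{1}(expn1 9) leq_pexp2l.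
  by rewrite expnM expnS expn1; move: n_le; set X := (9 ^ q)%N; nia.
have e9 : 9 <= expR 4 :> RR.
  rewrite (_ : 4 = 2 + 2) 1?exp.expRD; last by lra.
  have := expR_ge1Dx (2 : RR); nra.
have : (9 ^ (q * 2))%:R <= expR ((q * 2)%:R * 4) :> RR.
  by rewrite expRM_natl natrX; apply: lerXn2r; rewrite ?nnegrE ?ler0n ?expR_ge0.
rewrite -(ler_nat RR) => + n_le9; move/(le_trans n_le9).
rewrite -ler_ln ?posrE ?ltr0n ?expR_gt0 // expRK natrM; lra.
Qed.

Local Open Scope classical_set_scope.
Local Open Scope ring_scope.

Theorem corollary3 :
  (exists eps : RR, 0 < eps /\ exists c : RR, 0 < c /\ exists N : nat,
    forall (n q : nat), (N <= n)%N ->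
    forall (d : measure_display) (Omega : measurableType d)
           (P : probability Omega RR) (T : Omega -> alg n),
      (forall w, nonadaptive (T w)) ->
      one_sided_tester P T q eps ->
      c * Num.sqrt (n%:R) <= q%:R)
  /\
  (exists eps : RR, 0 < eps /\ exists c : RR, 0 < c /\ exists N : nat,
    forall (n q : nat), (N <= n)%N ->
    forall (d : measure_display) (Omega : measurableType d)
           (P : probability Omega RR) (T : Omega -> alg n),
      one_sided_tester P T q eps ->
      c * ln (n%:R) <= q%:R).
Proof.
split.
  exists (1 / 8); split; first lra; exists (1 / 3); split; first lra.
  exists 2%N => -[//|n] q n2 d Omega P T nonad tester.
  exact/sqrt_lower_bound/(nonadaptive_lower_bound nonad tester).
exists (1 / 8); split; first lra; exists (1 / 8); split; first lra.
exists 5%N => -[//|n] q n5 d Omega P T tester.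
exact/ln_lower_bound/(adaptive_lower_bound tester).
Qed.
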